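(* Let $A_1,A_2,B_1,B_2$ be $\{0,1\}$-valued random variables. Suppose a classical probability model for $(A_1,A_2,B_1)$ satisfies $\langle A_1\rangle=\langle A_2\rangle=\langle B_1\rangle=\tfrac12$ and $\langle A_1B_1\rangle=\langle A_2B_1\rangle=\tfrac14+\tfrac{\sqrt2}{8}$. Then in this model $\tfrac{\sqrt2}{4}\le\langle A_1A_2\rangle\le\tfrac12$. Suppose a classical probability model for $(A_1,A_2,B_2)$ satisfies $\langle A_1\rangle=\langle A_2\rangle=\langle B_2\rangle=\tfrac12$, $\langle A_1B_2\rangle=\tfrac14+\tfrac{\sqrt2}{8}$ and $\langle A_2B_2\rangle=\tfrac14-\tfrac{\sqrt2}{8}$. Then in this model $0\le\langle A_1A_2\rangle\le\tfrac12-\tfrac{\sqrt2}{4}$. In particular, since $\tfrac12-\tfrac{\sqrt2}{4}<\tfrac14<\tfrac{\sqrt2}{4}$, no common value of $\langle A_1A_2\rangle$ is possible in the two models.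
   Context: A classical probability model for a finite set of $\{0,1\}$-valued variables is a probability space on which they are realized as indicator functions; $\langle\cdot\rangle$ denotes expectation in that model. The given numbers are the quantum-mechanical predictions for two spin-$1/2$ particles in the singlet state $\tfrac{1}{\sqrt2}(|+-\rangle-|-+\rangle)$, with $A_1=\tfrac{1+\sigma_x}{2}$, $A_2=\tfrac{1+\sigma_z}{2}$ on the first particle and $B_1=\tfrac12-\tfrac{\tau_x+\tau_z}{2\sqrt2}$, $B_2=\tfrac12-\tfrac{\tau_x-\tau_z}{2\sqrt2}$ on the second ($\sigma_i,\tau_i$ Pauli matrices on the first and second particle). *)

(* A classical probability model for {0,1}-valued
   variables: a probability space (T, P) on which each variable is the
   indicator function \1_E of a measurable event E; <.> is 'E_P. *)
From HB Require Import structures.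
From mathcomp Require Import all_boot all_order all_algebra.
From mathcomp Require Import all_classical all_reals all_analysis.
Set Implicit Arguments. Unset Strict Implicit. Unset Printing Implicit Defensive.

(* Write p = P(A1 ∩ B), q = P(A2 ∩ B).  If p + q exceeds P(B), the two events
   must overlap inside B by at least p + q - P(B); with B = B1 this forces
   P(A1 ∩ A2) >= sqrt2/4.  Conversely A1 ∩ A2 is covered by (A1 \ B) ∪ (A2 ∩ B),
   so P(A1 ∩ A2) <= P(A1) - p + q, which for B = B2 is 1/2 - sqrt2/4. *)
From HB Require Import structures.
From mathcomp Require Import all_boot all_order all_algebra.
From mathcomp Require Import all_classical all_reals all_analysis.
From mathcomp Require Import lra.
Set Implicit Arguments. Unset Strict Implicit.
Import Order.TTheory GRing.Theory Num.Theory.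
Local Open Scope classical_set_scope.
Local Open Scope ring_scope.

Section finite_measure_real.
Context {d : measure_display} {T : measurableType d} {R : realType}.
Variable mu : {finite_measure set T -> \bar R}.

Definition fmeasure (A : set T) : R := fine (mu A).

Lemma fmeasureE A : measurable A -> mu A = (fmeasure A)%:E.
Proof. by move=> mA; rewrite /fmeasure fineK // fin_num_measure. Qed.

Lemma fmeasure_ge0 A : measurable A -> 0 <= fmeasure A.
Proof. by move=> mA; rewrite -lee_fin -fmeasureE. Qed.

Lemma le_fmeasure A B : measurable A -> measurable B -> A `<=` B ->
  fmeasure A <= fmeasure B.
Proof. by move=> mA mB AB; rewrite -lee_fin -!fmeasureE // le_measure ?inE. Qed.

Lemma fmeasureUI A B : measurable A -> measurable B ->
  fmeasure (A `|` B) + fmeasure (A `&` B) = fmeasure A + fmeasure B.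
Proof.
move=> mA mB; have mI := measurableI _ _ mA mB.
apply: EFin_inj; rewrite !EFinD -!fmeasureE //; last exact: measurableU.
rewrite measureUfinr ?ltey_eq ?fin_num_measure //.
by rewrite subeK // fin_num_measure.
Qed.

Lemma fmeasureDI A B : measurable A -> measurable B ->
  fmeasure A = fmeasure (A `\` B) + fmeasure (A `&` B).
Proof.
move=> mA mB; apply: EFin_inj; rewrite EFinD -!fmeasureE //;
  [exact: measureDI | exact: measurableI | exact: measurableD].
Qed.

Lemma fmeasureU_le A B : measurable A -> measurable B ->
  fmeasure (A `|` B) <= fmeasure A + fmeasure B.
Proof.
move=> mA mB; rewrite -fmeasureUI //.
by rewrite lerDl fmeasure_ge0 //; exact: measurableI.
Qed.

Lemma fmeasureIB_overlap A1 A2 B :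
  measurable A1 -> measurable A2 -> measurable B ->
  fmeasure (A1 `&` B) + fmeasure (A2 `&` B) - fmeasure B <= fmeasure (A1 `&` A2).
Proof.
move=> m1 m2 mB.
have m1B := measurableI _ _ m1 mB; have m2B := measurableI _ _ m2 mB.
rewrite -fmeasureUI // lerBlDl lerD //.
- by apply: le_fmeasure (measurableU _ _ m1B m2B) mB _ => x [] [].
- apply: le_fmeasure (measurableI _ _ m1B m2B) (measurableI _ _ m1 m2) _.
  by move=> x [[a1 _] [a2 _]].
Qed.

Lemma fmeasureI_le_detour A1 A2 B :
  measurable A1 -> measurable A2 -> measurable B ->
  fmeasure (A1 `&` A2) <= fmeasure A1 - fmeasure (A1 `&` B) + fmeasure (A2 `&` B).
Proof.
move=> m1 m2 mB.
have m1DB := measurableD m1 mB; have m2B := measurableI _ _ m2 mB.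
rewrite [X in X - _](fmeasureDI m1 mB) addrK.
apply: le_trans (fmeasureU_le m1DB m2B).
apply: le_fmeasure; [exact: measurableI | exact: measurableU |].
by move=> x [a1 a2]; have [b|nb] := pselect (B x); [right | left].
Qed.

End finite_measure_real.

Lemma expectation_indicE {d : measure_display} {T : measurableType d} {R : realType}
    (P : probability T R) (A : set T) :
  measurable A -> ('E_P[\1_A] = (fmeasure P A)%:E)%E.
Proof. by move=> mA; rewrite expectation_indic // fmeasureE. Qed.

Lemma expectation_indicM {d : measure_display} {T : measurableType d} {R : realType}
    (P : probability T R) (A B : set T) :
  measurable A -> measurable B ->
  ('E_P[fun w => (\1_A w * \1_B w)%R] = (fmeasure P (A `&` B))%:E)%E.
Proof.
move=> mA mB; rewrite -expectation_indicE; last exact: measurableI.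
by rewrite indicI.
Qed.

Lemma sqrt2_gt1 (R : realType) : 1 < Num.sqrt 2 :> R.
Proof. by rewrite -[X in X < _]sqrtr1 ltr_sqrt ?ltr1n. Qed.

Lemma A1A2_B1_model_bounds (R : realType) (d : measure_display)
    (T : measurableType d) (P : probability T R) (A1 A2 B1 : set T) :
  measurable A1 -> measurable A2 -> measurable B1 ->
  ('E_P[\1_A1] = (1 / 2)%:E)%E -> ('E_P[\1_A2] = (1 / 2)%:E)%E ->
  ('E_P[\1_B1] = (1 / 2)%:E)%E ->
  ('E_P[fun w => (\1_A1 w * \1_B1 w)%R] = (1 / 4 + Num.sqrt 2 / 8)%:E)%E ->
  ('E_P[fun w => (\1_A2 w * \1_B1 w)%R] = (1 / 4 + Num.sqrt 2 / 8)%:E)%E ->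
  ((Num.sqrt 2 / 4)%:E <= 'E_P[fun w => (\1_A1 w * \1_A2 w)%R] <= (1 / 2)%:E)%E.
Proof.
move=> m1 m2 mB; rewrite !expectation_indicE // !expectation_indicM //.
move=> [e1] _ [eB] [e1B] [e2B].
have overlap := fmeasureIB_overlap P m1 m2 mB.
have sub1 := le_fmeasure P (measurableI _ _ m1 m2) m1 (@subIsetl _ A1 A2).
rewrite !lee_fin; apply/andP; split; lra.
Qed.

Lemma A1A2_B2_model_bounds (R : realType) (d : measure_display)
    (T : measurableType d) (P : probability T R) (A1 A2 B2 : set T) :
  measurable A1 -> measurable A2 -> measurable B2 ->
  ('E_P[\1_A1] = (1 / 2)%:E)%E -> ('E_P[\1_A2] = (1 / 2)%:E)%E ->
  ('E_P[\1_B2] = (1 / 2)%:E)%E ->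
  ('E_P[fun w => (\1_A1 w * \1_B2 w)%R] = (1 / 4 + Num.sqrt 2 / 8)%:E)%E ->
  ('E_P[fun w => (\1_A2 w * \1_B2 w)%R] = (1 / 4 - Num.sqrt 2 / 8)%:E)%E ->
  (0%:E <= 'E_P[fun w => (\1_A1 w * \1_A2 w)%R] <= (1 / 2 - Num.sqrt 2 / 4)%:E)%E.
Proof.
move=> m1 m2 mB; rewrite !expectation_indicE // !expectation_indicM //.
move=> [e1] _ _ [e1B] [e2B].
have detour := fmeasureI_le_detour P m1 m2 mB.
have ge0 := fmeasure_ge0 P (measurableI _ _ m1 m2).
rewrite !lee_fin; apply/andP; split; lra.
Qed.

Theorem mainTheorem2 (R : realType) :
  (forall (d : measure_display) (T : measurableType d) (P : probability T R)
     (A1 A2 B1 : set T),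
     measurable A1 -> measurable A2 -> measurable B1 ->
     ('E_P[\1_A1] = (1 / 2)%:E)%E ->
     ('E_P[\1_A2] = (1 / 2)%:E)%E ->
     ('E_P[\1_B1] = (1 / 2)%:E)%E ->
     ('E_P[fun w => (\1_A1 w * \1_B1 w)%R] = (1 / 4 + Num.sqrt 2 / 8)%:E)%E ->
     ('E_P[fun w => (\1_A2 w * \1_B1 w)%R] = (1 / 4 + Num.sqrt 2 / 8)%:E)%E ->
     ((Num.sqrt 2 / 4)%:E <= 'E_P[fun w => (\1_A1 w * \1_A2 w)%R] <= (1 / 2)%:E)%E)
  /\
  (forall (d : measure_display) (T : measurableType d) (P : probability T R)
     (A1 A2 B2 : set T),
     measurable A1 -> measurable A2 -> measurable B2 ->
     ('E_P[\1_A1] = (1 / 2)%:E)%E ->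
     ('E_P[\1_A2] = (1 / 2)%:E)%E ->
     ('E_P[\1_B2] = (1 / 2)%:E)%E ->
     ('E_P[fun w => (\1_A1 w * \1_B2 w)%R] = (1 / 4 + Num.sqrt 2 / 8)%:E)%E ->
     ('E_P[fun w => (\1_A2 w * \1_B2 w)%R] = (1 / 4 - Num.sqrt 2 / 8)%:E)%E ->
     (0%:E <= 'E_P[fun w => (\1_A1 w * \1_A2 w)%R] <= (1 / 2 - Num.sqrt 2 / 4)%:E)%E)
  /\
  (1 / 2 - Num.sqrt 2 / 4 < (1 / 4 : R) < Num.sqrt 2 / 4)
  /\
  (forall (d : measure_display) (T : measurableType d) (P : probability T R)
     (A1 A2 B1 : set T)
     (d' : measure_display) (T' : measurableType d') (P' : probability T' R)
     (A1' A2' B2' : set T'),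
     measurable A1 -> measurable A2 -> measurable B1 ->
     ('E_P[\1_A1] = (1 / 2)%:E)%E ->
     ('E_P[\1_A2] = (1 / 2)%:E)%E ->
     ('E_P[\1_B1] = (1 / 2)%:E)%E ->
     ('E_P[fun w => (\1_A1 w * \1_B1 w)%R] = (1 / 4 + Num.sqrt 2 / 8)%:E)%E ->
     ('E_P[fun w => (\1_A2 w * \1_B1 w)%R] = (1 / 4 + Num.sqrt 2 / 8)%:E)%E ->
     measurable A1' -> measurable A2' -> measurable B2' ->
     ('E_P'[\1_A1'] = (1 / 2)%:E)%E ->
     ('E_P'[\1_A2'] = (1 / 2)%:E)%E ->
     ('E_P'[\1_B2'] = (1 / 2)%:E)%E ->
     ('E_P'[fun w => (\1_A1' w * \1_B2' w)%R] = (1 / 4 + Num.sqrt 2 / 8)%:E)%E ->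
     ('E_P'[fun w => (\1_A2' w * \1_B2' w)%R] = (1 / 4 - Num.sqrt 2 / 8)%:E)%E ->
     ('E_P[fun w => (\1_A1 w * \1_A2 w)%R] <> 'E_P'[fun w => (\1_A1' w * \1_A2' w)%R])%E).
Proof.
have s_gt1 := sqrt2_gt1 R.
split; first exact: A1A2_B1_model_bounds.
split; first exact: A1A2_B2_model_bounds.
split; first by apply/andP; split; lra.
move=> d T P A1 A2 B1 d' T' P' A1' A2' B2' m1 m2 mB e1 e2 eB e1B e2B
  m1' m2' mB' e1' e2' eB' e1B' e2B' same.
have /andP[lb _] := A1A2_B1_model_bounds m1 m2 mB e1 e2 eB e1B e2B.
have /andP[_ ub] := A1A2_B2_model_bounds m1' m2' mB' e1' e2' eB' e1B' e2B'.
rewrite same in lb; have := le_trans lb ub; rewrite lee_fin; lra.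
Qed.
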